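(* Let $n\ge 2$ and let $c:E_n\to\mathbb{C}$ be an admissible edge weighting of $Q_n$. Let $x_1,x_2,y_1,y_2$ be vertices of $Q_n$ inducing a $4$-cycle with edges $e=\{x_1,y_1\}$, $f=\{y_1,x_2\}$, $g=\{x_2,y_2\}$, $h=\{y_2,x_1\}$. (1) If $c(e)\ne0$ and $c(f)\ne0$, then also $c(g)\neq 0$ and $c(h)\ne0$, and $\frac{c(e)}{c(f)} = -\overline{\left(\frac{c(g)}{c(h)}\right)}$. (2) In that case, $|c(e)|=|c(g)|$ and $|c(f)|=|c(h)|$. (3) The subgraph $Q_n(c)\subset Q_n$ is a disjoint union of sub-hypercubes.
   Context: For $n\ge1$, identify integers $0\le i<2^n$ with their $n$-digit binary representations; $i\#k$ is $i$ with its $k$-th digit flipped. The hypercube $Q_n$ has vertex classes $U_n$ (even number of $1$'s) and $V_n$ (odd number of $1$'s), with edge set $E_n$ consisting of pairs $ij$, $i\in U_n$, $j\in V_n$, $j = i\#k$ for some $k<n$; $\mathcal{N}(x)$ is the set of neighbors of $x$. For $c:E_n\to\mathbb{C}$, $Q_n(c)=(U_n(c),V_n(c),E_n(c))$ is the subgraph consisting of the edges $ij$ with $c(ij)\ne0$ and their endpoints. $c$ is admissible if $\sum_{i\in\mathcal{N}(j_1)\cap\mathcal{N}(j_2)} c(ij_1)\overline{c(ij_2)} = \delta_{j_1j_2}$ for all $j_1,j_2\in V_n(c)$ and $\sum_{j\in\mathcal{N}(i_1)\cap\mathcal{N}(i_2)} c(i_1j)\overline{c(i_2j)} = \delta_{i_1i_2}$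 for all $i_1,i_2\in U_n(c)$. A sub-hypercube of $Q_n$ is, for a set $K\subseteq\{0,\dots,n-1\}$ and a vertex $a$, the subgraph induced by all vertices agreeing with $a$ in every binary digit outside $K$. *)

(* Complex numbers are modelled by an arbitrary
   numClosedFieldType C (this includes the complex numbers R[i] of
   mathcomp-real-closed); conjugation is x^*, modulus `|x|. *)
From HB Require Import structures.
From mathcomp Require Import all_boot all_order all_algebra.
Set Implicit Arguments. Unset Strict Implicit. Unset Printing Implicit Defensive.
Import Order.TTheory GRing.Theory Num.Theory.
Local Open Scope ring_scope.

Definition vtx (n : nat) := {ffun 'I_n -> bool}.

Definition flip n (x : vtx n) (k : 'I_n) : vtx n :=
  [ffun m => if m == k then ~~ x m else x m].

Definition ones n (x : vtx n) : nat := #|[set k | x k]|.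

Definition evenv n (x : vtx n) : bool := ~~ odd (ones x).
Definition oddv n (x : vtx n) : bool := odd (ones x).

Definition adj n (x y : vtx n) : bool := [exists k, y == flip x k].

(* An edge weighting c : E_n -> C is represented by c : vtx n -> vtx n -> C,
   where c i j is the weight of the edge ij with i in U_n, j in V_n, j adjacent
   to i. Values of c off E_n are irrelevant and never used. *)

Definition Uc n (C : numClosedFieldType) (c : vtx n -> vtx n -> C) (i : vtx n) : Prop :=
  evenv i /\ exists j, [/\ oddv j, adj i j & c i j != 0].
Definition Vc n (C : numClosedFieldType) (c : vtx n -> vtx n -> C) (j : vtx n) : Prop :=
  oddv j /\ exists i, [/\ evenv i, adj i j & c i j != 0].

Definition admissible n (C : numClosedFieldType) (c : vtx n -> vtx n -> C) : Prop :=
  (forall j1 j2, Vc c j1 -> Vc c j2 ->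
     \sum_(i : vtx n | adj i j1 && adj i j2) c i j1 * (c i j2)^* = (j1 == j2)%:R)
  /\
  (forall i1 i2, Uc c i1 -> Uc c i2 ->
     \sum_(j : vtx n | adj i1 j && adj i2 j) c i1 j * (c i2 j)^* = (i1 == i2)%:R).

Definition cw n (C : numClosedFieldType) (c : vtx n -> vtx n -> C) (x y : vtx n) : C :=
  if evenv x then c x y else c y x.

Definition subcube n (K : {set 'I_n}) (a : vtx n) : {set vtx n} :=
  [set v : vtx n | [forall k : 'I_n, (k \notin K) ==> (v k == a k)]].

Definition is_subcube n (B : {set vtx n}) : Prop :=
  exists K a, B = subcube K a.

(* Q_n(c) is a disjoint union of sub-hypercubes: there is a family of
   pairwise disjoint sub-hypercubes whose vertices are exactly the vertices
   of Q_n(c) and whose (induced) edges are exactly the edges of Q_n(c). *)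
Definition disjoint_union_of_subcubes n (C : numClosedFieldType)
  (c : vtx n -> vtx n -> C) : Prop :=
  exists P : {set {set vtx n}},
    [/\ forall B, B \in P -> is_subcube B,
        trivIset P,
        (forall x, (Uc c x \/ Vc c x) <-> x \in cover P) &
        (forall i j, evenv i -> adj i j ->
           (c i j != 0 <-> exists2 B, B \in P & (i \in B) && (j \in B)))].

From HB Require Import structures.
From mathcomp Require Import all_boot all_order all_algebra.
Set Implicit Arguments. Unset Strict Implicit. Unset Printing Implicit Defensive.
Import Order.TTheory GRing.Theory Num.Theory.
Local Open Scope ring_scope.

(* For a 4-cycle x1 y1 x2 y2 with edge weights e, f, g, h (edges x1y1, y1x2,
   x2y2, y2x1), both {x1, x2} and {y1, y2} are pairs of distinct vertices of
   the same class with exactly two common neighbours, so admissibility gives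
       e f^* + h g^* = 0   and   e h^* + f g^* = 0.
   The first relation forces g, h != 0 once e, f != 0; taking moduli in both
   gives |f| = |h| and |e| = |g|, and dividing them gives e/f = -(g/h)^*.
   Hence if the edges at x in directions a and b carry nonzero weight, so does
   the edge at x#a in direction b: the set D(x) of directions of the nonzero
   edges at x does not change along an edge of Q_n(c), so it is constant on
   the subcube through x spanned by D(x). *)

Section Hypercube.
Variable n : nat.
Implicit Types (x y z a b v w : vtx n) (k : 'I_n) (K : {set 'I_n}).

Lemma flipE x k m : flip x k m = x m (+) (m == k).
Proof. by rewrite ffunE; case: (m == k); case: (x m). Qed.

Lemma flipK x k : flip (flip x k) k = x.
Proof. by apply/ffunP => m; rewrite !flipE -addbA addbb addbF. Qed.

Lemma flipC x k m : flip (flip x k) m = flip (flip x m) k.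
Proof. by apply/ffunP => i; rewrite !flipE -!addbA [(i == k) (+) _]addbC. Qed.

Lemma flip_id x k : flip x k k = ~~ x k.
Proof. by rewrite flipE eqxx addbT. Qed.

Lemma flip_out x k m : m != k -> flip x k m = x m.
Proof. by rewrite flipE => /negbTE ->; rewrite addbF. Qed.

Lemma flip_flip_eq y (a b p q : 'I_n) : a != b ->
  flip (flip y a) p = flip (flip y b) q -> (p = a /\ q = b) \/ (p = b /\ q = a).
Proof.
move=> /negbTE neq_ab /ffunP E.
have := E a; have := E b; rewrite !flipE -!addbA => /addbI Eb /addbI Ea.
move: Ea Eb; rewrite eqxx neq_ab [b == a]eq_sym neq_ab eqxx /=.
have [<-|neq_ap] := eqVneq a p; [left | right].
  by move: Eb; rewrite eq_sym neq_ab => /esym/negbFE/eqP ->.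
by move/esym/eqP: Ea Eb => <-; rewrite [b == a]eq_sym neq_ab => /eqP ->.
Qed.

Lemma adjP x y : reflect (exists k, y = flip x k) (adj x y).
Proof. by apply: (iffP existsP) => -[k /eqP]; exists k. Qed.

Lemma adj_flip x k : adj x (flip x k).
Proof. by apply/adjP; exists k. Qed.

Lemma adj_sym x y : adj x y = adj y x.
Proof. by apply/adjP/adjP => -[k ->]; exists k; rewrite flipK. Qed.

Lemma oddv_flip x k : oddv (flip x k) = ~~ oddv x.
Proof.
rewrite /oddv /ones (cardsD1 k [set m | x m]) (cardsD1 k [set m | flip x k m]).
have -> : [set m | flip x k m] :\ k = [set m | x m] :\ k.
  by apply/setP => m; rewrite !inE; case: eqVneq => //= /flip_out ->.
by rewrite !inE flip_id; case: (x k); rewrite /= ?negbK.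
Qed.

Lemma evenvE x : evenv x = ~~ oddv x.
Proof. by []. Qed.

Lemma adj_oddv x y : adj x y -> oddv y = evenv x.
Proof. by case/adjP => k ->; rewrite oddv_flip. Qed.

Lemma cwC (C : numClosedFieldType) (c : vtx n -> vtx n -> C) x y :
  adj x y -> cw c x y = cw c y x.
Proof.
move=> xy; have := adj_oddv xy; rewrite adj_sym in xy; have := adj_oddv xy.
by rewrite /cw !evenvE; do 2 case: oddv.
Qed.

Definition square x1 y1 x2 y2 : bool :=
  [&& x1 != x2, y1 != y2 & [&& adj x1 y1, adj y1 x2, adj x2 y2 & adj y2 x1]].

Lemma square_rot x1 y1 x2 y2 : square x1 y1 x2 y2 -> square y1 x2 y2 x1.
Proof.
case/and3P=> neq_x neq_y /and4P[? ? ? ?].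
by rewrite /square [x2 == x1]eq_sym neq_x neq_y /=; apply/and4P.
Qed.

Lemma square_evenv x1 y1 x2 y2 : square x1 y1 x2 y2 -> evenv x1 = evenv x2.
Proof.
case/and3P=> _ _ /and4P[/adj_oddv odd_y1 /adj_oddv odd_x2 _ _].
by rewrite -odd_y1 evenvE odd_x2 evenvE negbK.
Qed.

Lemma square_common_adj x1 y1 x2 y2 z : square x1 y1 x2 y2 ->
  adj x1 z -> adj x2 z -> (z == y1) || (z == y2).
Proof.
case/and3P=> neq_x neq_y /and4P[+ /adjP[b def_x2] a22 a21].
rewrite adj_sym => /adjP[a def_x1]; subst x1 x2.
have neq_ab : a != b by apply: contraNneq neq_x => ->.
have common w : adj (flip y1 a) w -> adj (flip y1 b) w ->
    w = y1 \/ w = flip (flip y1 a) b.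
  move=> /adjP[p ->] /adjP[q /(flip_flip_eq neq_ab)] [] [-> _]; last by right.
  by left; rewrite flipK.
rewrite adj_sym in a21; have [eq_y | ->] := common y2 a21 a22.
  by rewrite eq_y eqxx in neq_y.
by move=> /common /[apply] -[] ->; rewrite eqxx ?orbT.
Qed.

Lemma big_square (R : nmodType) (F : vtx n -> R) x1 y1 x2 y2 :
  square x1 y1 x2 y2 -> \sum_(z | adj x1 z && adj x2 z) F z = F y1 + F y2.
Proof.
move=> sq; have /and3P[_ neq_y /and4P[a11 a12 a22 a21]] := sq.
rewrite (bigD1 y1) ?a11 1?adj_sym ?a12 //= (bigD1 y2) /=; last first.
  by rewrite eq_sym neq_y a22 adj_sym a21.
rewrite big1 ?addr0 // => z /andP[/andP[/andP[a1 a2] neq_z1] neq_z2].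
by have := square_common_adj sq a1 a2; rewrite (negbTE neq_z1) (negbTE neq_z2).
Qed.

Lemma subcubeP K a v :
  reflect (forall k, k \notin K -> v k = a k) (v \in subcube K a).
Proof.
rewrite inE; apply: (iffP forallP) => [h k kK | h k].
  by apply/eqP; move/implyP: (h k); apply.
by apply/implyP => /h ->.
Qed.

Lemma subcube_refl K a : a \in subcube K a.
Proof. exact/subcubeP. Qed.

Lemma subcube_eq K a b : b \in subcube K a -> subcube K b = subcube K a.
Proof.
move=> /subcubeP b_in; apply/setP => v.
by apply/subcubeP/subcubeP => v_in k kK; rewrite v_in // b_in.
Qed.

Lemma flip_subcube K a y k :
  k \in K -> (flip y k \in subcube K a) = (y \in subcube K a).
Proof.
move=> kK; apply/subcubeP/subcubeP => y_in m mK;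
  have neq_mk : m != k by apply: contraNneq mK => ->.
  by rewrite -y_in // flip_out.
by rewrite flip_out // y_in.
Qed.

Lemma flip_in_subcube K a k : (flip a k \in subcube K a) = (k \in K).
Proof.
apply/idP/idP => [|kK]; last by rewrite flip_subcube // subcube_refl.
apply: contraLR => kK; apply/subcubeP => /(_ k kK)/eqP.
by rewrite flip_id; case: (a k).
Qed.

Lemma subcube_ind K a (P : vtx n -> Prop) :
  P a -> (forall y k, k \in K -> P y -> P (flip y k)) ->
  forall y, y \in subcube K a -> P y.
Proof.
move=> Pa Pflip y; move def_d: #|[set k | y k != a k]| => d.
elim: d y def_d => [|d IH] y def_d y_in.
  suff -> : y = a by [].
  apply/ffunP => k; apply/eqP/negPn; move/eqP: def_d; rewrite cards_eq0.
  by move=> /eqP/setP/(_ k); rewrite !inE => ->.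
have [k] : exists k, k \in [set k | y k != a k].
  by apply/set0Pn; rewrite -cards_eq0 def_d.
rewrite inE => neq_k.
have kK : k \in K by apply: contraNT neq_k => kK; rewrite (subcubeP _ _ _ y_in).
rewrite -(flipK y k); apply: (Pflip _ _ kK).
apply: IH; last by rewrite flip_subcube.
have -> : [set m | flip y k m != a m] = [set m | y m != a m] :\ k.
  apply/setP => m; rewrite !inE flipE.
  have [-> | _] := eqVneq m k; last by rewrite addbF.
  by rewrite addbT; move: neq_k; case: (y k); case: (a k).
by move: def_d; rewrite (cardsD1 k) inE neq_k => -[].
Qed.
End Hypercube.

Section Orthogonality.
Variable C : numClosedFieldType.
Implicit Types e f g h : C.

Lemma orth2_neq0 e f g h : e != 0 -> f != 0 -> e * f^* + h * g^* = 0 ->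
  h != 0 /\ g != 0.
Proof.
move=> e0 f0 E; have ef0 : e * f^* != 0 by rewrite mulf_neq0 ?conjC_eq0.
split; apply: contraNneq ef0 => z0.
  by move: E; rewrite z0 mul0r addr0 => ->.
by move: E; rewrite z0 conjC0 mulr0 addr0 => ->.
Qed.

Lemma orth2_ratio e f g h : e != 0 -> f != 0 -> g != 0 -> h != 0 ->
  e * f^* + h * g^* = 0 -> e * h^* + f * g^* = 0 ->
  [/\ e / f = - (g / h)^*, `|e| = `|g| & `|f| = `|h|].
Proof.
move=> e0 f0 g0 h0 /eqP; rewrite addr_eq0 => /eqP E1.
move=> /eqP; rewrite addr_eq0 => /eqP E2.
have N1 : `|e| * `|f| = `|h| * `|g|.
  by rewrite -(norm_conjC f) -(norm_conjC g) -!normrM E1 normrN.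
have N2 : `|e| * `|h| = `|f| * `|g|.
  by rewrite -(norm_conjC h) -(norm_conjC g) -!normrM E2 normrN.
have fh : `|f| = `|h|.
  have : `|h| ^+ 2 * `|g| = `|f| ^+ 2 * `|g|.
    by rewrite !expr2 -!mulrA -N1 -N2 mulrCA [RHS]mulrCA (mulrC `|h|).
  by move/(mulIf _)/eqP; rewrite normr_eq0 eqrXn2 // => /(_ g0)/eqP.
split=> //; last first.
  by apply: (mulIf (x := `|f|)); rewrite ?normr_eq0 // N1 fh mulrC.
rewrite fmorph_div; apply/eqP; rewrite -mulNr eqr_div ?conjC_eq0 //.
by rewrite E2 mulNr mulrC.
Qed.

End Orthogonality.

Section Weighting.
Variables (n : nat) (C : numClosedFieldType) (c : vtx n -> vtx n -> C).
Implicit Types (x y u w : vtx n).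

Lemma cw_support x y : adj x y -> cw c x y != 0 ->
  if evenv x then Uc c x else Vc c x.
Proof.
move=> xy; have odd_y := adj_oddv xy; rewrite /cw; case: ifP => even_x cxy.
  by split=> //; exists y; rewrite odd_y even_x.
split; first by move: even_x; rewrite evenvE => /negbFE.
by exists y; rewrite evenvE odd_y even_x adj_sym.
Qed.

Hypothesis hc : admissible c.

Lemma admissible_orth u1 u2 w1 w2 : u1 != u2 -> evenv u1 = evenv u2 ->
  adj u1 w1 -> adj u2 w2 -> cw c u1 w1 != 0 -> cw c u2 w2 != 0 ->
  \sum_(w | adj u1 w && adj u2 w) cw c u1 w * (cw c u2 w)^* = 0.
Proof.
move=> /negbTE neq_u even_u a1 a2 /(cw_support a1) supp1 /(cw_support a2) supp2.
transitivity ((u1 == u2)%:R : C); last by rewrite neq_u.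
case: hc => hV hU; rewrite /cw -even_u; move: supp1 supp2; rewrite -even_u.
case: ifP => _ supp1 supp2; first exact: hU.
by rewrite -(hV _ _ supp1 supp2); apply: eq_bigl => w; rewrite !(adj_sym w).
Qed.

Lemma square_orth x1 y1 x2 y2 : square x1 y1 x2 y2 ->
  cw c x1 y1 != 0 -> cw c y1 x2 != 0 ->
  cw c x1 y1 * (cw c y1 x2)^* + cw c y2 x1 * (cw c x2 y2)^* = 0.
Proof.
move=> sq e0; have /and3P[neq_x _ /and4P[a11 a12 _ a21]] := sq.
rewrite (cwC _ a12) (cwC _ a21).
rewrite -(big_square (fun w => cw c x1 w * (cw c x2 w)^*) sq).
rewrite adj_sym in a12.
exact: admissible_orth neq_x (square_evenv sq) a11 a12 e0.
Qed.

Lemma square_weights x1 y1 x2 y2 : square x1 y1 x2 y2 ->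
  cw c x1 y1 != 0 -> cw c y1 x2 != 0 ->
  [/\ cw c x2 y2 != 0, cw c y2 x1 != 0,
      cw c x1 y1 / cw c y1 x2 = - (cw c x2 y2 / cw c y2 x1)^*,
      `|cw c x1 y1| = `|cw c x2 y2| &
      `|cw c y1 x2| = `|cw c y2 x1|].
Proof.
move=> sq e0 f0; have E1 := square_orth sq e0 f0.
have [h0 g0] := orth2_neq0 e0 f0 E1.
have E2 := square_orth (square_rot sq) f0 g0; rewrite addrC in E2.
by have [] := orth2_ratio e0 f0 g0 h0 E1 E2.
Qed.

Definition supp_dirs x : {set 'I_n} := [set k | cw c x (flip x k) != 0].

Lemma supp_dirs_flip_subset x a :
  a \in supp_dirs x -> supp_dirs x \subset supp_dirs (flip x a).
Proof.
rewrite inE => xa; apply/subsetP => b; rewrite !inE => xb.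
have [<- | neq_ba] := eqVneq b a.
  by rewrite flipK cwC // adj_sym adj_flip.
have neq_ab : a != b by rewrite eq_sym.
have neq_x : flip x a != flip x b.
  by apply/eqP => /ffunP/(_ a); rewrite flip_id flip_out //; case: (x a).
have neq_y : x != flip (flip x a) b.
  by apply/eqP => /ffunP/(_ a); rewrite flip_out // flip_id; case: (x a).
have sq : square (flip x a) x (flip x b) (flip (flip x a) b).
  by rewrite /square neq_x neq_y adj_flip [adj (flip x a) _]adj_sym !adj_flip
    [adj _ (flip x a)]adj_sym adj_flip flipC adj_flip.
have xa' : cw c (flip x a) x != 0 by rewrite cwC // adj_sym adj_flip.
have [_ h0 _ _ _] := square_weights sq xa' xb.
by rewrite cwC ?adj_flip.
Qed.

Lemma supp_dirs_flip x a :
  a \in supp_dirs x -> supp_dirs (flip x a) = supp_dirs x.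
Proof.
move=> xa; have sub := supp_dirs_flip_subset xa.
apply/eqP; rewrite eqEsubset sub andbT.
by rewrite -{2}(flipK x a) supp_dirs_flip_subset // (subsetP sub).
Qed.

Lemma supp_dirs_subcube x y :
  y \in subcube (supp_dirs x) x -> supp_dirs y = supp_dirs x.
Proof.
apply: (subcube_ind (P := fun z => supp_dirs z = supp_dirs x)) => // z k kx zx.
by rewrite supp_dirs_flip zx.
Qed.

Lemma subcube_supp_dirs x y : y \in subcube (supp_dirs x) x ->
  subcube (supp_dirs y) y = subcube (supp_dirs x) x.
Proof. by move=> y_in; rewrite (supp_dirs_subcube y_in) (subcube_eq y_in). Qed.

Lemma support_supp_dirs x : Uc c x \/ Vc c x <-> supp_dirs x != set0.
Proof.
split=> [|/set0Pn[k]]; last first.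
  by rewrite inE => /(cw_support (adj_flip x k)); case: ifP; [left | right].
case=> [[even_x [y [_ /adjP[k ->] cxy]]] | [odd_x [y [_ /adjP[k def_x] cyx]]]].
  by apply/set0Pn; exists k; rewrite inE /cw even_x.
have xk : flip x k = y by rewrite def_x flipK.
by apply/set0Pn; exists k; rewrite inE xk /cw evenvE odd_x.
Qed.

Lemma supp_dirs_subcubes : disjoint_union_of_subcubes c.
Proof.
exists [set subcube (supp_dirs x) x | x in [set x | supp_dirs x != set0]].
split.
- by move=> _ /imsetP[x _ ->]; exists (supp_dirs x), x.
- apply/trivIsetP => _ _ /imsetP[x _ ->] /imsetP[y _ ->].
  apply: contraNT => /pred0Pn[z /andP[zx zy]] /=.
  by rewrite -(subcube_supp_dirs zx) -(subcube_supp_dirs zy) eqxx.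
- move=> x; rewrite cover_imset; split=> [/support_supp_dirs x0 | /bigcupP[y]].
    by apply/bigcupP; exists x; [rewrite inE | exact: subcube_refl].
  rewrite inE => y0 /supp_dirs_subcube x_in.
  by apply/(support_supp_dirs x); rewrite x_in.
- move=> i _ even_i /adjP[k ->].
  have -> : (c i (flip i k) != 0) = (k \in supp_dirs i).
    by rewrite inE /cw even_i.
  split=> [ki | [_ /imsetP[y _ ->] /andP[iy]]]; last first.
    by rewrite -(subcube_supp_dirs iy) flip_in_subcube.
  exists (subcube (supp_dirs i) i).
    by apply/imsetP; exists i; rewrite // inE; apply/set0Pn; exists k.
  by rewrite subcube_refl flip_in_subcube.
Qed.

End Weighting.

Theorem lemma4p2 (C : numClosedFieldType) (n : nat) (hn : (2 <= n)%N)
  (c : vtx n -> vtx n -> C) (hc : admissible c) :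
  (forall x1 x2 y1 y2 : vtx n,
     x1 != x2 -> y1 != y2 ->
     adj x1 y1 -> adj y1 x2 -> adj x2 y2 -> adj y2 x1 ->
     cw c x1 y1 != 0 -> cw c y1 x2 != 0 ->
     [/\ cw c x2 y2 != 0, cw c y2 x1 != 0,
         cw c x1 y1 / cw c y1 x2 = - (cw c x2 y2 / cw c y2 x1)^*,
         `|cw c x1 y1| = `|cw c x2 y2| &
         `|cw c y1 x2| = `|cw c y2 x1|])
  /\ disjoint_union_of_subcubes c.
Proof.
split; last exact: supp_dirs_subcubes.
move=> x1 x2 y1 y2 neq_x neq_y a11 a12 a22 a21.
have sq : square x1 y1 x2 y2 by rewrite /square neq_x neq_y a11 a12 a22 a21.
exact: square_weights.
Qed.
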